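(* If $\Sigma$ is a finite inductive signature, then $\mathcal{J}(\Sigma)=\mathcal{J}^*(\Sigma)$.
   Context: Fix an infinite set $V$ of variables with decidable equality, and a fresh variable provider: functions $\varphi,\mathsf{fr}$ assigning to each finite $X\subseteq V$ an inhabited subset $\varphi(X)\subseteq V\setminus X$ and an element $\mathsf{fr}(X)\in\varphi(X)$. Fix disjoint sets $F$ (function symbols) and $T$ (type symbols) with decidable equality. Preelements are terms built from variables and symbols of $F$; a pretype is $S(t_1,\ldots,t_n)$ with $S\in T$ and $t_i$ preelements. $\mathrm{V}(E)$ is the set of variables of an expression $E$, $\equiv$ is syntactic identity, and $E[\bar a/\bar x]$ is simultaneous substitution. A precontext is a sequence $\Gamma=x_1:A_1,\ldots,x_n:A_n$ of pretypes with $x_k\in\varphi(\{x_1,\ldots,x_{k-1}\})$ and $\mathrm{V}(A_k)\subseteq\{x_1,\ldots,x_{k-1}\}$; $\mathrm{OV}(\Gamma)=x_1,\ldots,x_n$, $\mathrm{V}(\Gamma)=\{x_1,\ldots,x_n\}$, $\mathrm{Fresh}(\Gamma)=\varphi(\mathrm{V}(\Gamma))$, $\mathrm{fresh}(\Gamma)=\mathsf{fr}(\mathrm{V}(\Gamma))$, $E[\bar a/\Gamma]=E[\bar a/x_1,\ldots,x_n]$. Top variables: $\mathrm{TV}(\langle\rangle)=\emptyset$, $\mathrm{TV}(\Gamma,x:A)=(\mathrm{TV}(\Gamma)\setminus\mathrm{V}(A))\cup\{x\}$. A determining sequence for $\Gamma$ is a strictly increasing $\bar i=i_1,\ldots,i_k$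 in $\{1,\ldots,n\}$ with $\mathrm{TV}(\Gamma)\subseteq\{x_{i_1},\ldots,x_{i_k}\}$; for $\bar a=a_1,\ldots,a_n$ put $\bar a_{\bar i}=a_{i_1},\ldots,a_{i_k}$. A type predeclaration is $(\Gamma,S,\bar i)$ with $S\in T$, $\bar i$ determining; a function predeclaration is $(\Gamma,f,\bar i,U)$ with $f\in F$, $\bar i$ determining, $U$ a pretype with $\mathrm{V}(U)\subseteq\mathrm{V}(\Gamma)$. A presignature is a set $\Sigma$ of predeclarations with no symbol declared twice. Judgements are ''$\Gamma$ context'', ''$A$ type $(\Gamma)$'', ''$a:A\ (\Gamma)$''. $\mathcal{J}(\Sigma)$ is the smallest set of judgements closed under: (R1) $\langle\rangle$ context; (R2) from $\Gamma$ context and $A$ type $(\Gamma)$ infer $\Gamma,x:A$ context, for $x\in\mathrm{Fresh}(\Gamma)$; (R3) from $x_1:A_1,\ldots,x_n:A_n$ context infer $x_i:A_i\ (x_1:A_1,\ldots,x_n:A_n)$; (R4) if $(\Gamma,S,\bar i)\in\Sigma$ and $\bar a:\Delta\to\Gamma$, infer $S(\bar a_{\bar i})$ type $(\Delta)$; (R5) if $(\Gamma,f,\bar i,U)\in\Sigma$, $\bar a:\Delta\to\Gamma$ and $U[\bar a/\Gamma]$ type $(\Delta)$, infer $f(\bar a_{\bar i}):U[\bar a/\Gamma]\ (\Delta)$. Here, for $\Gamma=x_1:A_1,\ldots,x_n:A_n$, the context map ''$\bar a:\Delta\to\Gamma$'' abbreviates the $n+2$ judgements $\Delta$ context, $\Gamma$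 context, and $a_k:A_k[a_1,\ldots,a_{k-1}/x_1,\ldots,x_{k-1}]\ (\Delta)$ for $k=1,\ldots,n$. $\Sigma$ is a signature if ($\Gamma$ context)$\in\mathcal{J}(\Sigma)$ whenever $(\Gamma,S,\bar i)\in\Sigma$, and ($U$ type $(\Gamma)$)$\in\mathcal{J}(\Sigma)$ whenever $(\Gamma,f,\bar i,U)\in\Sigma$. $\mathcal{J}^*(\Sigma)$ is defined exactly like $\mathcal{J}(\Sigma)$ except that (R5) is replaced by (R5* ): if $(\Gamma,f,\bar i,U)\in\Sigma$ and $\bar a:\Delta\to\Gamma$ (with the context-map judgements now read in $\mathcal{J}^*(\Sigma)$), infer $f(\bar a_{\bar i}):U[\bar a/\Gamma]\ (\Delta)$ (no premiss that $U[\bar a/\Gamma]$ is a type). A signature is inductive if it is obtained from the empty signature by finitely many steps, each adding either a type predeclaration $(\Gamma,S,\bar i)$ with $S$ not yet declared and ($\Gamma$ context)$\in\mathcal{J}$ of the current signature, or a function predeclaration $(\Gamma,f,\bar i,U)$ with $f$ not yet declared and ($U$ type $(\Gamma)$)$\in\mathcal{J}$ of the current signature. *)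

From Stdlib Require Import List Arith Sorting.Sorted.
Import ListNotations.
Set Implicit Arguments.

(* Preelements: variables and function symbols applied to lists of preelements
   (no fixed arity at the level of presyntax). *)
Inductive preelem (V F : Type) : Type :=
| Var (x : V)
| App (f : F) (ts : list (preelem V F)).
Arguments Var {V F} x.
Arguments App {V F} f ts.

Inductive pretype (V F T : Type) : Type :=
| PT (S : T) (ts : list (preelem V F)).
Arguments PT {V F T} S ts.

(* A (pre)context x1:A1,...,xn:An, listed in order (x1 first). *)
Definition ctx (V F T : Type) := list (V * pretype V F T).

Inductive judgement (V F T : Type) : Type :=
| JCtx (G : ctx V F T)
| JType (G : ctx V F T) (A : pretype V F T)
| JElem (G : ctx V F T) (a : preelem V F) (A : pretype V F T).
Arguments JCtx {V F T} G.
Arguments JType {V F T} G A.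
Arguments JElem {V F T} G a A.

(* Predeclarations; index sequences are 0-based (i < n instead of 1 <= i <= n). *)
Inductive decl (V F T : Type) : Type :=
| TDecl (G : ctx V F T) (S : T) (ii : list nat)
| FDecl (G : ctx V F T) (f : F) (ii : list nat) (U : pretype V F T).
Arguments TDecl {V F T} G S ii.
Arguments FDecl {V F T} G f ii U.

Definition decl_sym {V F T} (d : decl V F T) : T + F :=
  match d with TDecl _ S0 _ => inl S0 | FDecl _ f _ _ => inr f end.

Fixpoint vars_el {V F} (t : preelem V F) : list V :=
  match t with
  | Var x => [x]
  | App _ ts => (fix go (ts : list (preelem V F)) : list V :=
                   match ts with [] => [] | t :: ts' => vars_el t ++ go ts' end) ts
  end.

Definition vars_ty {V F T} (A : pretype V F T) : list V :=
  match A with PT _ ts => flat_map vars_el ts end.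

Definition OV {V F T} (G : ctx V F T) : list V := map fst G.
Definition Vset {V F T} (G : ctx V F T) : V -> Prop := fun v => In v (OV G).

Fixpoint lookup {V F} (eqV : forall x y : V, {x = y} + {x <> y})
  (s : list (V * preelem V F)) (x : V) : option (preelem V F) :=
  match s with
  | [] => None
  | (y, a) :: s' => if eqV x y then Some a else lookup eqV s' x
  end.

Fixpoint subst_el {V F} (eqV : forall x y : V, {x = y} + {x <> y})
  (s : list (V * preelem V F)) (t : preelem V F) : preelem V F :=
  match t with
  | Var x => match lookup eqV s x with Some a => a | None => Var x end
  | App f ts => App f ((fix go (ts : list (preelem V F)) : list (preelem V F) :=
                          match ts with [] => [] | t :: ts' => subst_el eqV s t :: go ts' end) ts)
  end.

Definition subst_ty {V F T} (eqV : forall x y : V, {x = y} + {x <> y})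
  (s : list (V * preelem V F)) (A : pretype V F T) : pretype V F T :=
  match A with PT S0 ts => PT S0 (map (subst_el eqV s) ts) end.

Definition select {X : Type} (a : list X) (ii : list nat) : list X :=
  flat_map (fun i => match nth_error a i with Some t => [t] | None => [] end) ii.

Definition finite_set {V : Type} (X : V -> Prop) : Prop :=
  exists l : list V, forall v, X v <-> In v l.

Definition fresh_provider {V : Type} (phi : (V -> Prop) -> (V -> Prop))
  (fr : (V -> Prop) -> V) : Prop :=
  forall X, finite_set X ->
    phi X (fr X) /\ (forall v, phi X v -> ~ X v).

Definition is_precontext {V F T} (phi : (V -> Prop) -> (V -> Prop)) (G : ctx V F T) : Prop :=
  forall k x A, nth_error G k = Some (x, A) ->
    phi (fun v => In v (firstn k (OV G))) x /\
    incl (vars_ty A) (firstn k (OV G)).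

Definition TV {V F T} (G : ctx V F T) : V -> Prop :=
  fold_left (fun (S0 : V -> Prop) (xA : V * pretype V F T) =>
               fun v => (S0 v /\ ~ In v (vars_ty (snd xA))) \/ v = fst xA)
            G (fun _ => False).

Definition determining {V F T} (G : ctx V F T) (ii : list nat) : Prop :=
  StronglySorted lt ii /\ Forall (fun i => i < length G) ii /\
  (forall v, TV G v -> exists i, In i ii /\ nth_error (OV G) i = Some v).

Definition is_predecl {V F T} (phi : (V -> Prop) -> (V -> Prop)) (d : decl V F T) : Prop :=
  match d with
  | TDecl G _ ii => is_precontext phi G /\ determining G ii
  | FDecl G _ ii U => is_precontext phi G /\ determining G ii /\ incl (vars_ty U) (OV G)
  end.

(* abar : D -> G, read in the judgement set P *)
Definition ctxmap {V F T} (eqV : forall x y : V, {x = y} + {x <> y})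
  (P : judgement V F T -> Prop) (a : list (preelem V F)) (D G : ctx V F T) : Prop :=
  P (JCtx D) /\ P (JCtx G) /\ length a = length G /\
  forall k x A ak, nth_error G k = Some (x, A) -> nth_error a k = Some ak ->
    P (JElem D ak (subst_ty eqV (combine (firstn k (OV G)) (firstn k a)) A)).

(* closure under R1-R4 and either R5 (star = false) or R5* (star = true) *)
Definition closed_under {V F T} (eqV : forall x y : V, {x = y} + {x <> y})
  (phi : (V -> Prop) -> (V -> Prop)) (Sigma : decl V F T -> Prop) (star : bool)
  (P : judgement V F T -> Prop) : Prop :=
  P (JCtx []) /\
  (forall G A x, P (JCtx G) -> P (JType G A) -> phi (Vset G) x ->
             P (JCtx (G ++ [(x, A)]))) /\
  (forall G k x A, P (JCtx G) -> nth_error G k = Some (x, A) ->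
             P (JElem G (Var x) A)) /\
  (forall G S0 ii D a, Sigma (TDecl G S0 ii) -> ctxmap eqV P a D G ->
             P (JType D (PT S0 (select a ii)))) /\
           (forall G f ii U D a, Sigma (FDecl G f ii U) -> ctxmap eqV P a D G ->
             (if star then True else P (JType D (subst_ty eqV (combine (OV G) a) U))) ->
             P (JElem D (App f (select a ii)) (subst_ty eqV (combine (OV G) a) U))).

Definition J {V F T} (eqV : forall x y : V, {x = y} + {x <> y})
  (phi : (V -> Prop) -> (V -> Prop)) (Sigma : decl V F T -> Prop) (j : judgement V F T) : Prop :=
  forall P, closed_under eqV phi Sigma false P -> P j.

Definition Jstar {V F T} (eqV : forall x y : V, {x = y} + {x <> y})
  (phi : (V -> Prop) -> (V -> Prop)) (Sigma : decl V F T -> Prop) (j : judgement V F T) : Prop :=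
  forall P, closed_under eqV phi Sigma true P -> P j.

Definition step_ok {V F T} (eqV : forall x y : V, {x = y} + {x <> y})
  (phi : (V -> Prop) -> (V -> Prop)) (l : list (decl V F T)) (d : decl V F T) : Prop :=
  match d with
  | TDecl G _ _ => J eqV phi (fun e => In e l) (JCtx G)
  | FDecl G _ _ U => J eqV phi (fun e => In e l) (JType G U)
  end.

Inductive built {V F T} (eqV : forall x y : V, {x = y} + {x <> y})
  (phi : (V -> Prop) -> (V -> Prop)) : list (decl V F T) -> Prop :=
| built_nil : built eqV phi []
| built_snoc (l : list (decl V F T)) (d : decl V F T) :
    built eqV phi l ->
    is_predecl phi d ->
    (forall d', In d' l -> decl_sym d' <> decl_sym d) ->
    step_ok eqV phi l d ->
    built eqV phi (l ++ [d]).

Definition inductive_signature {V F T} (eqV : forall x y : V, {x = y} + {x <> y})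
  (phi : (V -> Prop) -> (V -> Prop)) (Sigma : decl V F T -> Prop) : Prop :=
  exists l, built eqV phi l /\ forall d, Sigma d <-> In d l.

Definition finite_sig {V F T} (Sigma : decl V F T -> Prop) : Prop :=
  exists l : list (decl V F T), forall d, Sigma d <-> In d l.

From Stdlib Require Import List Arith Lia.
Import ListNotations.

(* J(Σ) ⊆ J*(Σ) because R5 has one premiss more than R5*.  Conversely it
   suffices that J(Σ) is closed under R5*, i.e. that U[ā/Γ] type (Δ) is
   derivable whenever (Γ,f,ī,U) ∈ Σ and ā : Δ → Γ.  In an inductive signature
   U type (Γ) was derivable when f was declared, so this is an instance of the
   substitution property of J(Σ): a judgement derivable in Γ stays derivable
   after substituting along any context map ā : Δ → Γ.  That property is
   proved by induction on derivations; the variable rule needs the freshness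
   of context variables, and the symbol rules need that context maps compose. *)

Section Substitution.
Context {V F T : Type} (eqV : forall x y : V, {x = y} + {x <> y}).
Implicit Types (s tau : list (V * preelem V F)) (t : preelem V F)
  (g : preelem V F -> preelem V F) (xs : list V) (a ts : list (preelem V F)).

Fixpoint preelem_nested_ind (P : preelem V F -> Prop) (HV : forall x, P (Var x))
  (HA : forall f ts, Forall P ts -> P (App f ts)) (t : preelem V F) : P t :=
  match t with
  | Var x => HV x
  | App f ts => HA f ts ((fix go ts : Forall P ts :=
      match ts with
      | [] => Forall_nil _
      | t :: ts' => Forall_cons _ (preelem_nested_ind P HV HA t) (go ts')
      end) ts)
  end.

Lemma subst_el_App s f ts : subst_el eqV s (App f ts) = App f (map (subst_el eqV s) ts).
Proof. induction ts as [|t ts IH]; [reflexivity|]; simpl in *; congruence. Qed.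

Lemma vars_el_App (f : F) ts : vars_el (App f ts) = flat_map vars_el ts.
Proof. induction ts as [|t ts IH]; [reflexivity|]; simpl in *; now rewrite IH. Qed.

Definition map_snd g s : list (V * preelem V F) := map (fun p => (fst p, g (snd p))) s.

Lemma lookup_map_snd g s x : lookup eqV (map_snd g s) x = option_map g (lookup eqV s x).
Proof. induction s as [|[y b] s IH]; simpl; [|destruct (eqV x y)]; auto. Qed.

Lemma combine_map_snd xs a g : combine xs (map g a) = map_snd g (combine xs a).
Proof. revert a; induction xs; intros [|b a0]; simpl; f_equal; auto. Qed.

Lemma subst_el_comp s tau t :
  (forall x, In x (vars_el t) -> lookup eqV s x <> None) ->
  subst_el eqV tau (subst_el eqV s t) = subst_el eqV (map_snd (subst_el eqV tau) s) t.
Proof.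
  induction t as [x|f ts IH] using preelem_nested_ind; intros Hdef.
  - simpl. rewrite lookup_map_snd.
    destruct (lookup eqV s x) eqn:E; [reflexivity|].
    now destruct (Hdef x (or_introl eq_refl)).
  - rewrite !subst_el_App, map_map. f_equal. apply map_ext_in. intros t Ht.
    apply (proj1 (Forall_forall _ _) IH t Ht). intros x Hx.
    apply Hdef. rewrite vars_el_App. apply in_flat_map; eauto.
Qed.

Lemma subst_ty_comp s tau (A : pretype V F T) :
  (forall x, In x (vars_ty A) -> lookup eqV s x <> None) ->
  subst_ty eqV tau (subst_ty eqV s A) = subst_ty eqV (map_snd (subst_el eqV tau) s) A.
Proof.
  destruct A as [S0 ts]; simpl; intros Hdef. f_equal. rewrite map_map.
  apply map_ext_in. intros t Ht. apply subst_el_comp.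
  intros x Hx. apply Hdef, in_flat_map; eauto.
Qed.

Lemma subst_el_ext s s' t :
  (forall x, In x (vars_el t) -> lookup eqV s x = lookup eqV s' x) ->
  subst_el eqV s t = subst_el eqV s' t.
Proof.
  induction t as [x|f ts IH] using preelem_nested_ind; intros Heq.
  - simpl. now rewrite (Heq x (or_introl eq_refl)).
  - rewrite !subst_el_App. f_equal. apply map_ext_in. intros t Ht.
    apply (proj1 (Forall_forall _ _) IH t Ht). intros x Hx.
    apply Heq. rewrite vars_el_App. apply in_flat_map; eauto.
Qed.

Lemma subst_ty_ext s s' (A : pretype V F T) :
  (forall x, In x (vars_ty A) -> lookup eqV s x = lookup eqV s' x) ->
  subst_ty eqV s A = subst_ty eqV s' A.
Proof.
  destruct A as [S0 ts]; simpl; intros Heq. f_equal. apply map_ext_in.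
  intros t Ht. apply subst_el_ext. intros x Hx. apply Heq, in_flat_map; eauto.
Qed.

Lemma lookup_combine_firstn k xs a x :
  In x (firstn k xs) ->
  lookup eqV (combine xs a) x = lookup eqV (combine (firstn k xs) (firstn k a)) x.
Proof.
  revert xs a; induction k as [|k IH]; intros [|y xs] [|b a] Hx; try contradiction; auto.
  simpl. destruct (eqV x y); [reflexivity|].
  apply IH. destruct Hx; congruence.
Qed.

Lemma lookup_combine_defined xs a x :
  In x xs -> length xs <= length a -> lookup eqV (combine xs a) x <> None.
Proof.
  revert a; induction xs as [|y xs IH]; intros [|b a] Hx Hlen; simpl in *; try lia; auto.
  destruct (eqV x y); [discriminate|].
  apply IH; [destruct Hx; congruence|lia].
Qed.

Lemma lookup_combine_nth xs a k x ak :
  nth_error xs k = Some x -> nth_error a k = Some ak -> ~ In x (firstn k xs) ->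
  lookup eqV (combine xs a) x = Some ak.
Proof.
  revert a k; induction xs as [|y xs IH]; intros [|b a] [|k] Hx Ha Hfirst;
    simpl in *; try discriminate.
  - injection Hx as ->; injection Ha as ->. now destruct (eqV x x).
  - destruct (eqV x y); [subst; tauto|]. eauto.
Qed.

Lemma select_map {X Y} (g : X -> Y) (l : list X) ii : select (map g l) ii = map g (select l ii).
Proof.
  induction ii as [|i ii IH]; simpl; auto.
  rewrite nth_error_map, IH. now destruct (nth_error l i).
Qed.

Lemma in_select {X} (l : list X) ii u : In u (select l ii) -> In u l.
Proof.
  intros Hu. apply in_flat_map in Hu as [i [_ Hi]].
  destruct (nth_error l i) eqn:E; [|contradiction].
  destruct Hi as [<-|[]]. eapply nth_error_In; eauto.
Qed.

End Substitution.

Lemma in_firstn {X} k (l : list X) x : In x (firstn k l) -> In x l.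
Proof. rewrite <- (firstn_skipn k l) at 2. intros; apply in_or_app; auto. Qed.

Lemma OV_length {V F T} (G : ctx V F T) : length (OV G) = length G.
Proof. apply length_map. Qed.

Section Derivability.
Context {V F T : Type} (eqV : forall x y : V, {x = y} + {x <> y})
  (phi : (V -> Prop) -> (V -> Prop)).

Lemma ctxmap_mono (P Q : judgement V F T -> Prop) a D G :
  (forall j, P j -> Q j) -> ctxmap eqV P a D G -> ctxmap eqV Q a D G.
Proof. intros PQ (HD & HG & Hlen & Hel). repeat split; eauto. Qed.

Lemma J_mono (S1 S2 : decl V F T -> Prop) j :
  (forall d, S1 d -> S2 d) -> J eqV phi S1 j -> J eqV phi S2 j.
Proof. intros HS Hj P (R1 & R2 & R3 & R4 & R5). apply Hj. repeat split; eauto. Qed.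

Lemma closed_under_star_weaken (Sg : decl V F T -> Prop) P :
  closed_under eqV phi Sg true P -> closed_under eqV phi Sg false P.
Proof. intros (R1 & R2 & R3 & R4 & R5). repeat split; auto. Qed.

Lemma J_incl_Jstar (Sg : decl V F T -> Prop) j : J eqV phi Sg j -> Jstar eqV phi Sg j.
Proof. intros Hj P HP. apply Hj, closed_under_star_weaken, HP. Qed.

Lemma built_fdecl_derivable (l : list (decl V F T)) G f ii U :
  built eqV phi l -> In (FDecl G f ii U) l -> J eqV phi (fun e => In e l) (JType G U).
Proof.
  induction 1 as [|l d _ IH _ _ Hok]; [contradiction|].
  intros Hd. eapply J_mono; [intros e He; apply in_or_app; left; exact He|].
  apply in_app_or in Hd as [Hd|[Hd|[]]]; [exact (IH Hd)|subst d; exact Hok].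
Qed.

Lemma precontext_snoc (G : ctx V F T) x A :
  is_precontext phi G -> phi (Vset G) x -> incl (vars_ty A) (OV G) ->
  is_precontext phi (G ++ [(x, A)]).
Proof.
  intros HG Hx HA k y B Hk. unfold OV in *. rewrite map_app.
  destruct (Nat.lt_ge_cases k (length G)) as [Hlt|Hge].
  - rewrite nth_error_app1 in Hk by exact Hlt.
    rewrite firstn_app, length_map, (proj2 (Nat.sub_0_le k _)) by lia.
    rewrite app_nil_r. exact (HG k y B Hk).
  - rewrite nth_error_app2 in Hk by exact Hge.
    destruct (k - length G) as [|[|m]] eqn:E; try discriminate.
    injection Hk as <- <-. replace k with (length (map fst G)) by (rewrite length_map; lia).
    rewrite firstn_app, Nat.sub_diag, firstn_all, app_nil_r. now split.
Qed.

Lemma precontext_nth_incl (G : ctx V F T) k x A :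
  is_precontext phi G -> nth_error G k = Some (x, A) ->
  In x (OV G) /\ incl (vars_ty A) (OV G).
Proof.
  intros HG Hk. split.
  - apply nth_error_In with k. unfold OV. now rewrite nth_error_map, Hk.
  - intros v Hv. eapply in_firstn, (proj2 (HG k x A Hk)), Hv.
Qed.

Section Signature.
Variable Sg : decl V F T -> Prop.
Local Notation derivable := (J eqV phi Sg).

Lemma J_closed : closed_under eqV phi Sg false derivable.
Proof.
  repeat split; intros *.
  - intros P (R1 & _). exact R1.
  - intros HG HA Hx P HP. apply (proj1 (proj2 HP)); [apply HG, HP|apply HA, HP|exact Hx].
  - intros HG Hk P HP. apply (proj1 (proj2 (proj2 HP)) _ k); [apply HG, HP|exact Hk].
  - intros HS Ha P HP. pose proof HP as (_ & _ & _ & R4 & _).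
    apply (R4 _ _ _ _ _ HS).
    eapply ctxmap_mono; [|exact Ha]. intros j Hj; apply Hj, HP.
  - intros HS Ha HU P HP. pose proof HP as (_ & _ & _ & _ & R5).
    apply (R5 _ _ _ _ _ _ HS); [|exact (HU P HP)].
    eapply ctxmap_mono; [|exact Ha]. intros j Hj; apply Hj, HP.
Qed.

Lemma J_ind_pair (Q : judgement V F T -> Prop) :
  closed_under eqV phi Sg false (fun j => derivable j /\ Q j) ->
  forall j, derivable j -> Q j.
Proof. intros HQ j Hj. apply (Hj _ HQ). Qed.

Definition scoped (j : judgement V F T) : Prop :=
  match j with
  | JCtx G => is_precontext phi G
  | JType G A => incl (vars_ty A) (OV G)
  | JElem G t A => incl (vars_el t) (OV G) /\ incl (vars_ty A) (OV G)
  end.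

Lemma ctxmap_select_scoped (P : judgement V F T -> Prop) a D G ii :
  (forall j, P j -> scoped j) -> ctxmap eqV P a D G ->
  incl (flat_map vars_el (select a ii)) (OV D).
Proof.
  intros HP (_ & _ & Hlen & Hel) v Hv.
  apply in_flat_map in Hv as [t [Ht Hv]]. apply in_select in Ht.
  apply In_nth_error in Ht as [k Hk].
  destruct (nth_error G k) as [[y B]|] eqn:HGk.
  - exact (proj1 (HP _ (Hel k y B t HGk Hk)) v Hv).
  - apply nth_error_None in HGk.
    assert (k < length a) by (apply nth_error_Some; congruence). lia.
Qed.

Lemma J_scoped j : derivable j -> scoped j.
Proof.
  pose proof J_closed as (C1 & C2 & C3 & C4 & C5).
  revert j; apply J_ind_pair. split; [|split; [|split; [|split]]].
  - split; [exact C1|]. intros k x A Hk. now destruct k.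
  - intros G A x [HG HGs] [HA HAs] Hx.
    split; [now apply C2|now apply precontext_snoc].
  - intros G k x A [HG HGs] Hk.
    destruct (precontext_nth_incl G k x A HGs Hk) as [Hx HA].
    split; [now apply C3 with k|split; [intros v [<-|[]]; exact Hx|exact HA]].
  - intros G S0 ii D a HS Ha.
    split; [apply (C4 G S0 ii D a HS)|eapply ctxmap_select_scoped; [|exact Ha]];
      [eapply ctxmap_mono; [|exact Ha]|]; now intros j [].
  - intros G f ii U D a HS Ha [HU HUs].
    split; [apply (C5 G f ii U D a HS); [|exact HU]|split; [|exact HUs]].
    + eapply ctxmap_mono; [|exact Ha]. now intros j [].
    + rewrite vars_el_App. eapply ctxmap_select_scoped; [|exact Ha]. now intros j [].
Qed.

Definition substitutive (j : judgement V F T) : Prop :=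
  match j with
  | JCtx _ => True
  | JType G A => forall a D, ctxmap eqV derivable a D G ->
      derivable (JType D (subst_ty eqV (combine (OV G) a) A))
  | JElem G t A => forall a D, ctxmap eqV derivable a D G ->
      derivable (JElem D (subst_el eqV (combine (OV G) a) t)
                         (subst_ty eqV (combine (OV G) a) A))
  end.

Lemma ctxmap_comp a D G a' D' :
  ctxmap eqV (fun j => derivable j /\ substitutive j) a D G ->
  ctxmap eqV derivable a' D' D ->
  ctxmap eqV derivable (map (subst_el eqV (combine (OV D) a')) a) D' G.
Proof.
  intros (_ & [HG _] & Hlen & Hel) Ha'. pose proof Ha' as [HD' _].
  repeat split; [exact HD'|exact HG|now rewrite length_map|].
  intros k x A bk HGk Hbk. rewrite nth_error_map in Hbk.
  destruct (nth_error a k) as [ak|] eqn:Hak; [|discriminate]. injection Hbk as <-.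
  pose proof (proj2 (Hel k x A ak HGk Hak) a' D' Ha') as Hsub; simpl in Hsub.
  rewrite subst_ty_comp, <- combine_map_snd, <- firstn_map in Hsub; [exact Hsub|].
  intros y Hy. apply lookup_combine_defined.
  - exact (proj2 (J_scoped _ HG k x A HGk) y Hy).
  - rewrite !length_firstn, OV_length, Hlen. lia.
Qed.

Variable fr : (V -> Prop) -> V.
Hypothesis Hfresh : fresh_provider phi fr.

(* Freshness of [x] over the earlier variables makes [x[ā/Γ]] the k-th
   component of [ā], and [A] only sees those earlier variables. *)
Lemma var_substitutive G k x A :
  derivable (JCtx G) -> nth_error G k = Some (x, A) -> substitutive (JElem G (Var x) A).
Proof.
  intros HG Hk a D (_ & _ & Hlen & Hel).
  destruct (J_scoped _ HG k x A Hk) as [Hx HA].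
  destruct (nth_error a k) as [ak|] eqn:Hak.
  2:{ apply nth_error_None in Hak.
      assert (k < length G) by (apply nth_error_Some; congruence). lia. }
  assert (Hnew : ~ In x (firstn k (OV G))).
  { apply (proj2 (Hfresh _ (ex_intro _ (firstn k (OV G)) (fun v => iff_refl _))) x Hx). }
  simpl. rewrite (lookup_combine_nth eqV (OV G) a k x ak); auto.
  2:{ unfold OV. now rewrite nth_error_map, Hk. }
  erewrite subst_ty_ext; [exact (Hel k x A ak Hk Hak)|].
  intros y Hy. apply lookup_combine_firstn, HA, Hy.
Qed.

Hypothesis fdecls_derivable :
  forall G f ii U, Sg (FDecl G f ii U) -> derivable (JType G U).

Lemma fdecl_subst_comp G f ii U a (D : ctx V F T) a' :
  Sg (FDecl G f ii U) -> length a = length G ->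
  subst_ty eqV (combine (OV D) a') (subst_ty eqV (combine (OV G) a) U)
  = subst_ty eqV (combine (OV G) (map (subst_el eqV (combine (OV D) a')) a)) U.
Proof.
  intros HS Hlen. rewrite subst_ty_comp, combine_map_snd; [reflexivity|].
  intros y Hy. apply lookup_combine_defined.
  - exact (J_scoped _ (fdecls_derivable G f ii U HS) y Hy).
  - rewrite OV_length, Hlen. lia.
Qed.

Lemma J_substitutive j : derivable j -> substitutive j.
Proof.
  pose proof J_closed as (C1 & C2 & C3 & C4 & C5).
  revert j; apply J_ind_pair. split; [|split; [|split; [|split]]].
  - split; [exact C1|exact I].
  - intros G A x [HG _] [HA _] Hx. split; [now apply C2|exact I].
  - intros G k x A [HG _] Hk.
    split; [now apply C3 with k|now apply var_substitutive with k].
  - intros G S0 ii D a HS Ha. split.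
    + apply (C4 G S0 ii D a HS). eapply ctxmap_mono; [|exact Ha]. now intros j [].
    + intros a' D' Ha'. simpl. rewrite <- select_map.
      exact (C4 G S0 ii D' _ HS (ctxmap_comp a D G a' D' Ha Ha')).
  - intros G f ii U D a HS Ha [HU HUsub]. pose proof Ha as (_ & _ & Hlen & _).
    split.
    + apply (C5 G f ii U D a HS); [|exact HU].
      eapply ctxmap_mono; [|exact Ha]. now intros j [].
    + intros a' D' Ha'.
      rewrite subst_el_App, <- select_map, (fdecl_subst_comp G f ii U a D a' HS Hlen).
      apply (C5 G f ii U D' _ HS (ctxmap_comp a D G a' D' Ha Ha')).
      rewrite <- (fdecl_subst_comp G f ii U a D a' HS Hlen). exact (HUsub a' D' Ha').
Qed.

Lemma J_closed_star : closed_under eqV phi Sg true derivable.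
Proof.
  pose proof J_closed as (C1 & C2 & C3 & C4 & C5).
  repeat split; auto.
  intros G f ii U D a HS Ha _. apply (C5 G f ii U D a HS Ha).
  exact (J_substitutive _ (fdecls_derivable G f ii U HS) a D Ha).
Qed.

Lemma Jstar_incl_J j : Jstar eqV phi Sg j -> derivable j.
Proof. intros Hj. exact (Hj _ J_closed_star). Qed.

End Signature.
End Derivability.

Theorem mainTheorem7
  (V F T : Type)
  (eqV : forall x y : V, {x = y} + {x <> y})
  (eqF : forall x y : F, {x = y} + {x <> y})
  (eqT : forall x y : T, {x = y} + {x <> y})
  (V_infinite : forall l : list V, exists v, ~ In v l)
  (phi : (V -> Prop) -> (V -> Prop)) (fr : (V -> Prop) -> V)
  (Hfresh : fresh_provider phi fr)
  (Sigma : decl V F T -> Prop)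
  (Hfin : finite_sig Sigma)
  (Hind : inductive_signature eqV phi Sigma) :
  forall j : judgement V F T, J eqV phi Sigma j <-> Jstar eqV phi Sigma j.
Proof.
  destruct Hind as [l [Hbuilt Hl]].
  assert (Hfdecls : forall G f ii U, Sigma (FDecl G f ii U) -> J eqV phi Sigma (JType G U)).
  { intros G f ii U HS.
    apply (J_mono eqV phi (fun e => In e l)); [intros e; apply Hl|].
    apply (built_fdecl_derivable eqV phi l G f ii U Hbuilt), Hl, HS. }
  intros j; split.
  - apply J_incl_Jstar.
  - apply (Jstar_incl_J eqV phi Sigma fr Hfresh Hfdecls).
Qed.
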